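(* Let $T$ be a tournament in which every vertex lies in some triangle, and let $w:V(T)\to\mathbb{Q}_{\ge0}$. Suppose there is an optimal solution $x$ of $\min\{\sum_v w(v)x_v : x\in P(T)\}$ with $x_v<1/2$ for all $v\in V(T)$. Then $\mathrm{SA}_0(T,w)=\min\{\sum_v w(v)x_v: x\in P(T)\}=w(V(T))/3$.
   Context: A triangle of a tournament $T$ is a set $\{a,b,c\}\subseteq V(T)$ inducing a directed 3-cycle; $\triangle(T)$ is the set of triangles. The basic relaxation is $P(T)=\{x\in[0,1]^{V(T)}: x_a+x_b+x_c\ge 1\ \forall\{a,b,c\}\in\triangle(T)\}$ and $\mathrm{SA}_0(T,w)=\min\{\sum_v w(v)x_v: x\in P(T)\}$. $w(V(T))=\sum_{v}w(v)$. *)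

From HB Require Import structures.
From mathcomp Require Import all_boot all_order all_algebra.
Set Implicit Arguments. Unset Strict Implicit. Unset Printing Implicit Defensive.
Import Order.TTheory GRing.Theory Num.Theory.
Local Open Scope ring_scope.

Definition tournament (V : finType) (arc : rel V) : Prop :=
  (forall v, ~~ arc v v) /\
  (forall u v, u != v -> (arc u v && ~~ arc v u) || (arc v u && ~~ arc u v)).

Definition triangles (V : finType) (arc : rel V) : {set {set V}} :=
  [set t : {set V} | [exists a, exists b, exists c,
     (t == [set a; b; c]) && [&& arc a b, arc b c & arc c a]]].

Definition inP (R : realFieldType) (V : finType) (arc : rel V) (x : V -> R) : Prop :=
  (forall v, 0 <= x v <= 1) /\
  (forall t, t \in triangles arc -> 1 <= \sum_(v in t) x v).

Definition lp_obj (R : realFieldType) (V : finType) (w : V -> rat) (x : V -> R) : R :=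
  \sum_v ratr (w v) * x v.

Definition lp_optimal (R : realFieldType) (V : finType) (arc : rel V)
    (w : V -> rat) (x : V -> R) : Prop :=
  inP arc x /\ forall y : V -> R, inP arc y -> lp_obj w x <= lp_obj w y.

Definition is_SA0 (R : realFieldType) (V : finType) (arc : rel V)
    (w : V -> rat) (val : R) : Prop :=
  (exists x : V -> R, inP arc x /\ lp_obj w x = val) /\
  (forall y : V -> R, inP arc y -> val <= lp_obj w y).

From HB Require Import structures.
From mathcomp Require Import all_boot all_order all_algebra.
From mathcomp Require Import ring lra.
Import Order.TTheory GRing.Theory Num.Theory.
Local Open Scope ring_scope.

(* Write W = w(V(T)).  The constant vector 1/3 lies in P(T)
   and has objective W/3, so SA_0(T,w) <= W/3; it remains to show that the
   given optimal solution x (with all x_v < 1/2) has objective >= W/3.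
   Since every vertex v lies in a triangle whose two other coordinates are
   < 1/2, we get x_v > 0, hence m := min_v x_v is positive.  The "stretched"
   vector y = (1 + m) x - m/3 (moving x away from the centre 1/3) is still in
   P(T): coordinates stay in [0,1] because m <= x_v <= 1/2, and each triangle
   sum becomes sum + m (sum - 1) >= 1.  Its objective is
   (1 + m) obj(x) - m W / 3, so optimality of x gives m (obj(x) - W/3) >= 0,
   i.e. obj(x) >= W/3.  The file first describes triangles as explicit
   3-sets, then proves the affine behaviour of the objective, feasibility of
   1/3 and of the stretched vector, and finally the lower bound.  The
   argument never uses the sign of the weights. *)

Lemma sum_set3 (V : finType) (M : nmodType) (a b c : V) (f : V -> M) :
  a != b -> a != c -> b != c ->
  \sum_(v in [set a; b; c]) f v = f a + f b + f c.
Proof.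
move=> ab ac bc; rewrite setUC big_setU1 /=; last first.
  by rewrite !inE negb_or eq_sym ac eq_sym bc.
by rewrite big_setU1 /= ?inE // big_set1 addrC.
Qed.

Lemma lp_obj_affine {R : realFieldType} {V : finType} (w : V -> rat)
    (x : V -> R) (p q : R) :
  lp_obj w (fun v => p * x v - q) = p * lp_obj w x - q * ratr (\sum_v w v).
Proof.
rewrite /lp_obj rmorph_sum !mulr_sumr -sumrB.
by apply: eq_bigr => v _; ring.
Qed.

Lemma lp_obj_const {R : realFieldType} {V : finType} (w : V -> rat) (c : R) :
  lp_obj w (fun _ => c) = c * ratr (\sum_v w v).
Proof.
rewrite /lp_obj rmorph_sum mulr_sumr.
by apply: eq_bigr => v _; rewrite mulrC.
Qed.

Lemma pos_lower_bound {R : realFieldType} {V : finType} (x : V -> R) :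
  (forall v, 0 < x v) -> exists2 m, 0 < m <= 1 & forall v, m <= x v.
Proof.
move=> xpos; exists (\big[Num.min/1]_v x v).
  apply/andP; split.
    apply: (big_ind (fun y => 0 < y)) => // p q hp hq.
    by rewrite lt_min hp hq.
  apply: (big_rec (fun y => y <= 1)) => // v y _ hy.
  by rewrite ge_min hy orbT.
by move=> v; rewrite (bigD1 v) //= ge_min lexx.
Qed.

Section Relaxation.

Variables (R : realFieldType) (V : finType) (arc : rel V).
Hypothesis T : tournament arc.

Lemma arc_neq {u v : V} : arc u v -> u != v.
Proof. by case: T => irr _ h; apply: contraTneq h => ->; exact: irr. Qed.

Lemma arc_asym {u v : V} : arc u v -> ~~ arc v u.
Proof.
case: T => _ tot h; have := tot u v (arc_neq h).
by case/orP=> /andP[// _]; rewrite h.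
Qed.

Lemma triangleP (t : {set V}) : t \in triangles arc ->
  exists a b c, [/\ t = [set a; b; c], a != b, a != c & b != c].
Proof.
rewrite inE => /existsP[a /existsP[b /existsP[c]]].
case/andP=> /eqP -> /and3P[ab bc ca]; exists a, b, c; split => //.
- exact: arc_neq.
- by apply: contraTneq ab => ->; exact: arc_asym bc.
- exact: arc_neq.
Qed.

Lemma triangle_sum (f : V -> R) {t : {set V}} : t \in triangles arc ->
  exists a b c, t = [set a; b; c] /\ \sum_(v in t) f v = f a + f b + f c.
Proof.
case/triangleP=> a [b [c [-> ab ac bc]]].
by exists a, b, c; split; last exact: sum_set3.
Qed.

Lemma third_inP : inP arc (fun _ : V => 1 / 3 : R).
Proof.
split=> [v | t tT]; first by apply/andP; split; lra.
by have [a [b [c [_ ->]]]] := triangle_sum (fun _ => 1 / 3 : R) tT; lra.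
Qed.

Lemma pos_in_triangle {x : V -> R} {v : V} :
  inP arc x -> (forall u, x u < 1 / 2) ->
  (exists2 t, t \in triangles arc & v \in t) -> 0 < x v.
Proof.
move=> [_ xt] xh [t tT vt].
have [a [b [c [et hs]]]] := triangle_sum x tT.
have := xt t tT; rewrite hs.
move: vt; rewrite et !inE => /orP[/orP[]|] /eqP->;
  have := xh a; have := xh b; have := xh c; lra.
Qed.

Lemma stretch_inP (x : V -> R) (m : R) :
  inP arc x -> 0 <= m <= 1 -> (forall v, m <= x v) -> (forall v, x v <= 1 / 2) ->
  inP arc (fun v => (1 + m) * x v - m / 3).
Proof.
move=> [_ xt] /andP[m0 m1] mx xh; split=> [v | t tT].
  have mxv : m * x v <= x v by rewrite -[leRHS]mul1r ler_wpM2r // (le_trans m0).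
  have := mx v; have := xh v; have : 0 <= m * x v by rewrite mulr_ge0 ?(le_trans m0).
  by rewrite mulrDl mul1r => *; apply/andP; split; lra.
have := xt t tT; case/triangleP: tT => a [b [c [-> ab ac bc]]].
rewrite !sum_set3 // => S1.
have : 0 <= m * (x a + x b + x c - 1) by rewrite mulr_ge0 // subr_ge0.
by rewrite mulrBr mulr1 !mulrDl !mulrDr mul1r; lra.
Qed.

(* The key estimate: an optimal solution with all coordinates < 1/2, in a
   tournament whose vertices all lie in triangles, has objective >= W/3,
   since otherwise the stretched solution would be strictly better. *)
Lemma optimal_ge_third (w : V -> rat) (x : V -> R) :
  (forall v, exists2 t, t \in triangles arc & v \in t) ->
  lp_optimal arc w x -> (forall v, x v < 1 / 2) ->
  ratr (\sum_v w v) / 3 <= lp_obj w x.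
Proof.
move=> covered [xP xopt] xh.
have [m m01 mx] := pos_lower_bound x (fun v => pos_in_triangle xP xh (covered v)).
have m0 : 0 < m by case/andP: m01.
have yP : inP arc (fun v => (1 + m) * x v - m / 3).
  apply: stretch_inP => //; first by case/andP: m01 => /ltW -> ->.
  by move=> v; exact: ltW.
have := xopt _ yP; rewrite lp_obj_affine => better.
have : 0 <= m * (lp_obj w x - ratr (\sum_v w v) / 3).
  by rewrite mulrBr mulrA; lra.
by rewrite pmulr_rge0 // subr_ge0.
Qed.

End Relaxation.

Theorem mainTheorem12 (R : realFieldType) (V : finType) (arc : rel V)
  (w : V -> rat) :
  tournament arc ->
  (forall v : V, exists2 t, t \in triangles arc & v \in t) ->
  (forall v : V, 0 <= w v) ->
  (exists x : V -> R, lp_optimal arc w x /\ (forall v, x v < 1 / 2)) ->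
  is_SA0 arc w (ratr (\sum_v w v) / 3 : R).
Proof.
move=> T covered _ [x [xopt xh]].
have lower := @optimal_ge_third R V arc T w x covered xopt xh.
split=> [|y yP]; last exact: le_trans lower (xopt.2 y yP).
exists (fun _ => 1 / 3); split; first exact: third_inP.
by rewrite lp_obj_const mulrC mul1r.
Qed.
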